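(* Let $H$ be a separated labeled hypergraph whose 1-skeleton is connected and contains an odd cycle. Then $\mathcal A[H]=k[H]$ if and only if at least one of the following holds: (1) $H$ has an odd number of vertices; (2) $H$ has an edge of even dimension, i.e., an edge with an odd number of vertices.
   Context: Let $k$ be a field and $S=k[x_1,\dots,x_n,y]$. For an integral convex polytope $\mathcal P\subseteq\mathbb R^n_{\ge 0}$, the Ehrhart ring $\mathcal A[\mathcal P]$ is the $k$-subspace of $S$ spanned by the monomials $x^{\mathbf a}y^t$ with $t\in\mathbb N$, $\mathbf a\in t\mathcal P\cap\mathbb Z^n$; the polytopal ring is $k[\mathcal P]=k[x^{\mathbf a}y:\mathbf a\in\mathcal P\cap\mathbb Z^n]$. A labeled hypergraph $H=(V,f)$ on a finite set $V$ with alphabet $\{x_1,\dots,x_n\}$ is a function $f:\{x_1,\dots,x_n\}\to\mathcal P(V)$; its edges are the nonempty sets in the image of $f$. $H$ is separated if for all distinct $v,w\in V$ there are edges $F,G$ with $v\in F\setminus G$, $w\in G\setminus F$. For separated $H$, let $x^{\mathbf a_v}=\prod_{x:\,v\in f(x)}x$ for $v\in V$, $\mathcal P_H=\mathrm{conv}\{\mathbf a_v:v\in V\}$, $\mathcal A[H]=\mathcal A[\mathcal P_H]$, $k[H]=k[\mathcal P_H]$. The dimension of an edge $E$ is $|E|-1$. The 1-skeleton of $H$ is the simple graph on $V$ whose edges are the edges of $H$ having exactly two vertices. *)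

From HB Require Import structures.
From mathcomp Require Import all_boot all_order all_algebra.
Set Implicit Arguments. Unset Strict Implicit. Unset Printing Implicit Defensive.
Import Order.TTheory GRing.Theory Num.Theory.
Local Open Scope ring_scope.

(* A labeled hypergraph on the finite vertex type V with alphabet
   {x_0,...,x_{n-1}} is a function f : 'I_n -> {set V}. *)

Definition is_edge (V : finType) (n : nat) (f : 'I_n -> {set V}) (E : {set V}) : Prop :=
  E != set0 /\ exists i, f i = E.

Definition separated (V : finType) (n : nat) (f : 'I_n -> {set V}) : Prop :=
  forall v w : V, v != w ->
    exists F G, is_edge f F /\ is_edge f G /\
      v \in F /\ v \notin G /\ w \in G /\ w \notin F.

(* exponent vector a_v : x^{a_v} = prod_{x : v \in f(x)} x *)
Definition avec (V : finType) (n : nat) (f : 'I_n -> {set V}) (v : V) (i : 'I_n) : nat :=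
  (v \in f i : nat).

(* a lies in t * P_H, P_H = conv{a_v : v in V} in R^n (R the real field) *)
Definition in_dilate (R : realFieldType) (V : finType) (n : nat)
    (f : 'I_n -> {set V}) (t : nat) (a : 'I_n -> nat) : Prop :=
  exists lam : V -> R,
    (forall v, 0 <= lam v) /\ \sum_v lam v = t%:R /\
    forall i, \sum_v lam v * (avec f v i)%:R = (a i)%:R.

(* Monomials x^a y^t of S = k[x_1..x_n,y] are encoded by (a, t). *)
Definition monomial (n : nat) := ({ffun 'I_n -> nat} * nat)%type.

(* Polynomials of S: finitely supported coefficient functions. *)
Definition finsupp (k : fieldType) (n : nat) (p : monomial n -> k) : Prop :=
  exists s : seq (monomial n), forall m, p m != 0 -> m \in s.

Definition kspan (k : fieldType) (n : nat) (M : monomial n -> Prop)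
    (p : monomial n -> k) : Prop :=
  finsupp p /\ forall m, p m != 0 -> M m.

Definition ehrhart_mon (R : realFieldType) (V : finType) (n : nat)
    (f : 'I_n -> {set V}) (m : monomial n) : Prop :=
  in_dilate R f m.2 m.1.

(* Monomials of k[P_H] = k[x^b y : b in P_H ∩ Z^n]: products of t generators. *)
Definition polytopal_mon (R : realFieldType) (V : finType) (n : nat)
    (f : 'I_n -> {set V}) (m : monomial n) : Prop :=
  exists b : 'I_m.2 -> ('I_n -> nat),
    (forall j, in_dilate R f 1 (b j)) /\
    forall i, m.1 i = (\sum_(j < m.2) b j i)%N.

(* A[H] and k[H] as subsets of S *)
Definition ehrhart_ring (k : fieldType) (R : realFieldType) (V : finType) (n : nat)
    (f : 'I_n -> {set V}) : (monomial n -> k) -> Prop :=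
  kspan (ehrhart_mon R f).

Definition polytopal_ring (k : fieldType) (R : realFieldType) (V : finType) (n : nat)
    (f : 'I_n -> {set V}) : (monomial n -> k) -> Prop :=
  kspan (polytopal_mon R f).

Definition skel (V : finType) (n : nat) (f : 'I_n -> {set V}) : rel V :=
  fun u v => (u != v) && [exists i, f i == [set u; v]].

Definition skel_connected (V : finType) (n : nat) (f : 'I_n -> {set V}) : Prop :=
  forall u v : V, connect (skel f) u v.

Definition skel_has_odd_cycle (V : finType) (n : nat) (f : 'I_n -> {set V}) : Prop :=
  exists c : seq V, [/\ (3 <= size c)%N, uniq c, cycle (skel f) c & odd (size c)].

From HB Require Import structures.
From mathcomp Require Import all_boot all_order all_algebra.
From mathcomp Require Import zify ring lra.
Import Order.TTheory GRing.Theory Num.Theory.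
Set Implicit Arguments. Unset Strict Implicit. Unset Printing Implicit Defensive.
Local Open Scope ring_scope.

(* Both rings are spanned by monomials, so the equality amounts to every
   Ehrhart monomial x^a y^t (a = sum_v lam_v a_v, lam >= 0, sum lam = t) being
   a product of t lattice points of P_H.  Coordinate i of a is the sum of
   lam over the edge f i; on a 2-edge {u,v} this says lam_u + lam_v is an
   integer.  Propagating this along the connected skeleton and around an odd
   cycle forces lam to be either integral or everywhere half-integral
   ([integral_coords_dichotomy]).
   - Integral weights write the monomial as a product of vertex generators
     x^(a_v) y.  Half-integral weights are excluded by an odd |V| (sum lam = t)
     or an odd edge (sum of lam over it = a_i) ([ehrhart_polytopal]).
   - If |V| and all edges are even, lam = 1/2 gives an Ehrhart monomial.
     Every lattice point of P_H has integral weights (half-integral weights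
     would sum to at least |V|/2 > 1), so a factorisation would give natural
     weights D with D_u + D_v = 1 on every 2-edge, i.e. a 2-colouring of the
     skeleton by parity, impossible on an odd cycle
     ([half_monomial_not_polytopal]). *)

Section Integrality.
Variable R : realFieldType.

Definition integral (x : R) : Prop := exists z : int, x = z%:~R.

Lemma integral_nat (m : nat) : integral m%:R.
Proof. by exists m. Qed.

Lemma integralD x y : integral x -> integral y -> integral (x + y).
Proof. by move=> [a ->] [b ->]; exists (a + b); rewrite intrD. Qed.

Lemma integralN x : integral x -> integral (- x).
Proof. by move=> [a ->]; exists (- a); rewrite intrN. Qed.

Lemma integralB x y : integral x -> integral y -> integral (x - y).
Proof. by move=> ix iy; apply/integralD/integralN. Qed.

Lemma integralM x y : integral x -> integral y -> integral (x * y).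
Proof. by move=> [a ->] [b ->]; exists (a * b); rewrite intrM. Qed.

Lemma integral_sign (m : nat) : integral ((-1) ^+ m).
Proof. by rewrite -signr_odd; case: odd; [exists (-1) | exists 1]. Qed.

Lemma integral_sum (I : Type) (r : seq I) (P : pred I) (F : I -> R) :
  (forall i, P i -> integral (F i)) -> integral (\sum_(i <- r | P i) F i).
Proof. by move=> iF; apply: big_ind => //; [exact: (integral_nat 0) | exact: integralD]. Qed.

Lemma integral_half_even (m : nat) : integral (m%:R / 2) -> ~~ odd m.
Proof.
move=> [z hz]; have : (m%:~R : R) = (2 * z)%:~R.
  by rewrite intrM -hz mulrC divfK ?pnatr_eq0.
by move/intr_inj => h; lia.
Qed.

Lemma integral_nonneg_nat (x : R) : 0 <= x -> integral x -> exists c : nat, x = c%:R.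
Proof.
by move=> x_ge0 [[c|c] hx]; [exists c | move: x_ge0; rewrite hx ler0z].
Qed.

Lemma half_integral_ge (x : R) : 0 <= x -> integral (x - 2^-1) -> 2^-1 <= x.
Proof.
move=> x_ge0 [z hz]; have [z_ge0|z_lt0] := leP 0 z.
  have : (0 : R) <= z%:~R by rewrite ler0z.
  rewrite -hz; lra.
have : (z%:~R : R) <= (-1)%:~R by rewrite ler_int; lia.
rewrite -hz /=; lra.
Qed.

Lemma twice_integral (y : R) : integral (y + y) -> integral y \/ integral (y - 2^-1).
Proof.
move=> [z hz]; set w := (z %/ 2)%Z.
have two : (2 : int)%:~R = 2 :> R by [].
have [ez|ez] : z = 2 * w \/ z = 2 * w + 1 by lia.
- by left; exists w; move: hz; rewrite ez intrM two; lra.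
- by right; exists w; move: hz; rewrite ez intrD intrM two; lra.
Qed.

Lemma half_natr (N : nat) : ~~ odd N -> (2^-1 : R) *+ N = (N./2)%:R.
Proof.
move=> N_even; rewrite -[X in _ *+ X](even_halfK N_even) -mul2n mulrnA.
by rewrite -[_ *+ 2]mulr_natr mulVf ?pnatr_eq0.
Qed.

End Integrality.

(* Along a path they alternate in sign modulo Z, so an odd cycle
   makes some weight half-integral and connectivity spreads this to all. *)
Section OddCycles.
Variables (R : realFieldType) (T : finType) (e : rel T).

Lemma path_alternating (lam : T -> R) :
    (forall u v, e u v -> integral (lam u + lam v)) ->
  forall x q, path e x q -> integral (lam (last x q) - (-1) ^+ size q * lam x).
Proof.
move=> int_e x q; elim: q x => [|y q IH] x /=.
  by rewrite mul1r subrr => _; exact: (integral_nat _ 0).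
move=> /andP[exy /IH int_q].
have -> : lam (last y q) - (-1) ^+ (size q).+1 * lam x =
  (lam (last y q) - (-1) ^+ size q * lam y) + (-1) ^+ size q * (lam x + lam y).
  by rewrite exprS; ring.
by apply/integralD/integralM => //; [exact: integral_sign | exact: int_e].
Qed.

Lemma odd_cycle_twice_integral (lam : T -> R) (x : T) (p : seq T) :
    (forall u v, e u v -> integral (lam u + lam v)) ->
  cycle e (x :: p) -> odd (size (x :: p)) -> integral (lam x + lam x).
Proof.
move=> int_e cyc odd_c; have := path_alternating int_e cyc.
by rewrite last_rcons size_rcons -signr_odd [odd _]odd_c expr1 mulN1r opprK.
Qed.

(* If 2 lam x is an integer and e is connected, every lam v is congruent to
   lam x modulo Z: the sign (-1)^q only changes lam x by 0 or -2 lam x. *)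
Lemma connected_diff_integral (lam : T -> R) (x : T) :
    (forall u v, connect e u v) ->
    (forall u v, e u v -> integral (lam u + lam v)) ->
  integral (lam x + lam x) -> forall v, integral (lam v - lam x).
Proof.
move=> conn int_e int_x v; have /connectP[q pq ->] := conn x v.
have int_q := path_alternating int_e pq.
have -> : lam (last x q) - lam x =
  (lam (last x q) - (-1) ^+ size q * lam x) + ((-1) ^+ size q - 1) * lam x by ring.
apply: integralD int_q _; rewrite -signr_odd; case: odd.
- have -> : ((-1) ^+ true - 1) * lam x = - (lam x + lam x) by rewrite expr1; ring.
  exact: integralN.
- by rewrite expr0 subrr mul0r; exact: (integral_nat _ 0).
Qed.

Lemma odd_cycle_not_bipartite (col : T -> bool) (c : seq T) :
  cycle e c -> odd (size c) -> ~ (forall u v, e u v -> col u != col v).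
Proof.
case: c => [//|x p] cyc odd_c proper.
have alt : forall y q, path e y q -> col (last y q) = col y (+) odd (size q).
  move=> y q; elim: q y => [|z q IH] y /=; first by rewrite addbF.
  move=> /andP[eyz /IH ->]; have := proper _ _ eyz.
  by case: (col y); case: (col z); case: odd.
have := alt _ _ cyc; rewrite last_rcons size_rcons.
by move: odd_c => /= ->; case: (col x).
Qed.

End OddCycles.

(* Throughout, a vertex weighting lam : V -> R represents the point
   sum_v lam_v a_v, whose i-th coordinate is the sum of lam over the edge f i. *)
Section Hypergraph.
Variables (R : realFieldType) (V : finType) (n : nat) (f : 'I_n -> {set V}).

Lemma coord_as_edge_sum (lam : V -> R) i :
  \sum_v lam v * (avec f v i)%:R = \sum_(v in f i) lam v.
Proof.
rewrite [RHS]big_mkcond; apply: eq_bigr => v _; rewrite /avec.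
by case: (v \in f i); rewrite ?mulr1 ?mulr0.
Qed.

Lemma coord_as_edge_sum_nat (C : V -> nat) i :
  (\sum_v C v * avec f v i = \sum_(v in f i) C v)%N.
Proof.
rewrite [RHS]big_mkcond; apply: eq_bigr => v _; rewrite /avec.
by case: (v \in f i); rewrite ?muln1 ?muln0.
Qed.

Lemma nat_weights_coord (C : V -> nat) (x : nat) i :
  \sum_v (C v)%:R * ((avec f v i)%:R : R) = x%:R -> x = (\sum_v C v * avec f v i)%N.
Proof.
move=> h; apply/eqP; rewrite -(eqr_nat R) -h natr_sum.
by apply/eqP; apply: eq_bigr => v _; rewrite natrM.
Qed.

Lemma sum_pair (M : Type) (idx : M) (op : Monoid.com_law idx) (F : V -> M) u v :
  u != v -> \big[op/idx]_(w in [set u; v]) F w = op (F u) (F v).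
Proof. by move=> uv; rewrite big_setU1 ?big_set1 // inE. Qed.

Lemma skel_edge_sum (lam : V -> R) (a : 'I_n -> nat) :
    (forall i, \sum_v lam v * (avec f v i)%:R = (a i)%:R) ->
  forall u v, skel f u v -> integral (lam u + lam v).
Proof.
move=> ha u v /andP[uv /existsP[i /eqP fi]].
by rewrite -sum_pair // -fi -coord_as_edge_sum ha; exact: integral_nat.
Qed.

Lemma half_integral_card_even (lam : V -> R) (S : {set V}) (m : nat) :
  (forall v, integral (lam v - 2^-1)) -> \sum_(v in S) lam v = m%:R -> ~~ odd #|S|.
Proof.
move=> half_lam sumS; apply: (@integral_half_even R).
have -> : #|S|%:R / 2 = \sum_(v in S) lam v - \sum_(v in S) (lam v - 2^-1).
  by rewrite sumrB opprB addrC subrK sumr_const -[RHS]mulr_natl mulrC.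
by apply: integralB; [rewrite sumS; exact: integral_nat | exact: integral_sum].
Qed.

Lemma vertex_in_polytope v : in_dilate R f 1 (avec f v).
Proof.
exists (fun w => (w == v)%:R); split=> [w|]; first exact: ler0n.
split=> [|i]; rewrite (bigD1 v) //= eqxx ?mul1r big1 ?addr0 // => w /negbTE -> //.
by rewrite mul0r.
Qed.

Lemma vertex_product_polytopal (s : seq V) (a : {ffun 'I_n -> nat}) :
  (forall i, a i = \sum_(x <- s) avec f x i)%N -> polytopal_mon R f (a, size s).
Proof.
move=> ha; exists (fun j => avec f (tnth (in_tuple s) j)).
by split=> [j | i]; [exact: vertex_in_polytope | rewrite ha (big_tuple _ _ (in_tuple s))].
Qed.

Definition vertex_multiset (C : V -> nat) : seq V :=
  flatten [seq nseq (C v) v | v <- enum V].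

Lemma sum_vertex_multiset (C : V -> nat) (g : V -> nat) :
  (\sum_(x <- vertex_multiset C) g x = \sum_v C v * g v)%N.
Proof.
rewrite big_flatten big_map big_enum /=.
by apply: eq_bigr => v _; rewrite big_nseq iter_addn_0 mulnC.
Qed.

Lemma polytopal_ehrhart (m : monomial n) : polytopal_mon R f m -> ehrhart_mon R f m.
Proof.
case: m => a t [/= b [hb ha]]; have [L hL] := fin_all_exists hb.
exists (fun v => \sum_j L j v); split=> [v|]; first by apply: sumr_ge0 => j _; case: (hL j).
split=> [|i].
  rewrite exchange_big /= (eq_bigr (fun _ => 1)) => [|j _]; last by case: (hL j) => _ [].
  by rewrite sumr_const card_ord.
rewrite ha natr_sum (eq_bigr (fun v => \sum_j L j v * (avec f v i)%:R)) => [|v _].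
  by rewrite exchange_big; apply: eq_bigr => j _; case: (hL j) => _ [_ ->].
by rewrite mulr_suml.
Qed.

(* The monomial with all weights 1/2: x^a y^t, a_i = |f i|/2, t = |V|/2. *)
Definition half_monomial : monomial n := ([ffun i => #|f i|./2], #|V|./2).

Lemma half_monomial_ehrhart :
  ~~ odd #|V| -> (forall i, ~~ odd #|f i|) -> ehrhart_mon R f half_monomial.
Proof.
move=> even_V even_f; exists (fun _ => 2^-1); split=> [_|]; first by rewrite invr_ge0 ler0n.
split=> [|i]; first by rewrite sumr_const -half_natr.
by rewrite coord_as_edge_sum sumr_const ffunE -half_natr.
Qed.

Section ConnectedOddCycle.
Hypothesis hconn : skel_connected f.
Hypothesis hcyc : skel_has_odd_cycle f.

Lemma integral_coords_dichotomy (lam : V -> R) (a : 'I_n -> nat) :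
    (forall i, \sum_v lam v * (avec f v i)%:R = (a i)%:R) ->
  (forall v, integral (lam v)) \/ (forall v, integral (lam v - 2^-1)).
Proof.
move=> /skel_edge_sum int_e; have [c [_ _ cyc odd_c]] := hcyc.
case: c cyc odd_c => [//|x p] cyc odd_c.
have twice_x := odd_cycle_twice_integral int_e cyc odd_c.
have int_diff := connected_diff_integral hconn int_e twice_x.
have split_v (y : R) v : lam v - y = (lam v - lam x) + (lam x - y) by ring.
case: (twice_integral twice_x) => [int_x|half_x].
- by left=> v; rewrite -[lam v]subr0 split_v subr0; exact: integralD.
- by right=> v; rewrite split_v; exact: integralD.
Qed.

(* The odd cycle has at least three distinct vertices. *)
Lemma three_le_card : (3 <= #|V|)%N.
Proof.
have [c [c3 uniq_c _ _]] := hcyc.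
by apply: leq_trans c3 _; rewrite -(card_uniqP uniq_c) max_card.
Qed.

Lemma polytope_point_nat_weights (b : 'I_n -> nat) :
  in_dilate R f 1 b -> exists C : V -> nat, forall i, b i = (\sum_v C v * avec f v i)%N.
Proof.
move=> [lam [lam_ge0 [sum1 hb]]].
case: (integral_coords_dichotomy hb) => [int_lam|half_lam].
  have /fin_all_exists[C hC] v : exists c : nat, lam v = c%:R.
    exact: integral_nonneg_nat.
  exists C => i; apply: nat_weights_coord; rewrite -hb.
  by apply: eq_bigr => v _; rewrite hC.
have : \sum_(v : V) (2^-1 : R) <= \sum_v lam v.
  by apply: ler_sum => v _; exact: half_integral_ge (lam_ge0 v) (half_lam v).
have : (3%:R : R) <= #|V|%:R by rewrite ler_nat three_le_card.
by rewrite sum1 sumr_const -mulr_natl; lra.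
Qed.

Lemma ehrhart_polytopal (m : monomial n) :
    (odd #|V| \/ exists E : {set V}, is_edge f E /\ odd #|E|) ->
  ehrhart_mon R f m -> polytopal_mon R f m.
Proof.
case: m => a t odd_part [lam [lam_ge0 [sum_t ha]]] /=.
case: (integral_coords_dichotomy ha) => [int_lam|half_lam]; last first.
  case: odd_part => [odd_V|[E [[_ [i fi]] odd_E]]].
  - suff : ~~ odd #|[set: V]| by rewrite cardsT odd_V.
    apply: (half_integral_card_even half_lam (m := t)).
    by rewrite -sum_t; apply: eq_bigl => v; rewrite inE.
  - suff : ~~ odd #|E| by rewrite odd_E.
    by apply: (half_integral_card_even half_lam (m := a i)); rewrite -fi -coord_as_edge_sum ha.
have /fin_all_exists[C hC] v : exists c : nat, lam v = c%:R.
  exact: integral_nonneg_nat.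
have -> : t = size (vertex_multiset C).
  rewrite -sum1_size sum_vertex_multiset; apply/eqP; rewrite -(eqr_nat R) -sum_t natr_sum.
  by apply/eqP; apply: eq_bigr => v _; rewrite muln1 hC.
apply: vertex_product_polytopal => i; rewrite sum_vertex_multiset.
by apply: nat_weights_coord; rewrite -ha; apply: eq_bigr => v _; rewrite hC.
Qed.

Lemma half_monomial_not_polytopal : ~ polytopal_mon R f half_monomial.
Proof.
move=> [/= b [hb ha]]; have [c [_ _ cyc odd_c]] := hcyc.
have /fin_all_exists[C hC] j := polytope_point_nat_weights (hb j).
pose D v := (\sum_j C j v)%N.
apply: (odd_cycle_not_bipartite (col := fun v => odd (D v)) cyc odd_c).
move=> u v /andP[uv /existsP[i /eqP fi]].
have sumD : (D u + D v = 1)%N.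
  have := ha i; rewrite ffunE fi cards2 uv /= => ->.
  rewrite (eq_bigr _ (fun j _ => hC j i)) exchange_big /=.
  rewrite (eq_bigr (fun w => D w * avec f w i)%N) => [|w _]; last by rewrite big_distrl.
  by rewrite coord_as_edge_sum_nat fi sum_pair.
by move: sumD => /(congr1 odd); rewrite oddD /=; case: odd; case: odd.
Qed.
End ConnectedOddCycle.
End Hypergraph.

Section Spans.
Variables (k : fieldType) (n : nat).

Lemma kspan_sub (M N : monomial n -> Prop) (p : monomial n -> k) :
  (forall m, M m -> N m) -> kspan M p -> kspan N p.
Proof. by move=> MN [fin_p supp_p]; split=> // m /supp_p /MN. Qed.

Definition monomial_poly (m0 : monomial n) : monomial n -> k :=
  fun m => (m == m0)%:R.

Lemma kspan_monomial (M : monomial n -> Prop) (m0 : monomial n) :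
  kspan M (monomial_poly m0) <-> M m0.
Proof.
rewrite /kspan /monomial_poly; split=> [[_ /(_ m0)] | M_m0].
  by rewrite eqxx oner_neq0 => /(_ isT).
split=> [|m].
  by exists [:: m0] => m; rewrite mem_seq1; case: (m =P m0); rewrite ?eqxx.
by case: (m =P m0) => [-> | _] //; rewrite eqxx.
Qed.
End Spans.

Theorem theorem4p1 (k : fieldType) (R : realFieldType) (V : finType) (n : nat)
    (f : 'I_n -> {set V}) :
  separated f -> skel_connected f -> skel_has_odd_cycle f ->
  ((forall p : monomial n -> k, ehrhart_ring R f p <-> polytopal_ring R f p) <->
   (odd #|V| \/ exists E : {set V}, is_edge f E /\ odd #|E|)).
Proof.
move=> _ hconn hcyc; split=> [same_rings | odd_part p]; last first.
  split; apply: kspan_sub => m; [exact: ehrhart_polytopal | exact: polytopal_ehrhart].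
have [odd_V | even_V] := boolP (odd #|V|); first by left.
have [/existsP[i odd_fi] | even_f] := boolP [exists i, odd #|f i|].
  right; exists (f i); split=> //; split; last by exists i.
  by apply: contraTneq odd_fi => ->; rewrite cards0.
exfalso; apply: (half_monomial_not_polytopal hconn hcyc).
apply/(kspan_monomial k)/same_rings/kspan_monomial/half_monomial_ehrhart => // i.
by apply: contraNN even_f => odd_fi; apply/existsP; exists i.
Qed.
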